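(* Consider a sequence of total systems indexed by the size $N$ (the system S is fixed and the bath grows). For each $N$, the total Hamiltonian $H=H^{(N)}$ on the finite-dimensional space $\mathcal{H}_{\mathrm{S}}\otimes\mathcal{H}_{\mathrm{B}}^{(N)}$ has non-degenerate spectrum with eigenpairs $(E_j,|E_j\rangle)$, and the initial state is a product $\rho(0)=\rho_{\mathrm{S}}(0)\otimes\rho_{\mathrm{B}}(0)$ (depending on $N$). Fix an energy density $u$ and widths $\Delta=\Delta_N>0$ with $\Delta_N=\mathcal{O}(N^\alpha)$, $0\le\alpha<1$; let $M_{uN,\Delta}:=\{j:|E_j-uN|\le\Delta\}$ (assumed nonempty), $D^{\mathrm{mc}}:=|M_{uN,\Delta}|$, and $\rho^{\mathrm{mc}}:=\frac{1}{D^{\mathrm{mc}}}\sum_{j\in M_{uN,\Delta}}|E_j\rangle\langle E_j|$. Assume: (i) with $P_{\mathrm{out}}:=\sum_{j\notin M_{uN,\Delta}}|E_j\rangle\langle E_j|$, for every $\epsilon>0$, $\mathrm{Tr}[P_{\mathrm{out}}\rho(0)]<\epsilon$ for all sufficiently large $N$; (ii) (weak ETH) for every $\epsilon>0$ there is a constant $\gamma_\epsilon>0$ such that for every $N$, $\frac{1}{D^{\mathrm{mc}}}\bigl|\{j\in M_{uN,\Delta}:\mathcal{D}_{\mathrm{S}}(|E_j\rangle\langle E_j|,\rho^{\mathrm{mc}})>\epsilon\}\bigr|<e^{-\gamma_\epsilon N}$; (iii) (large effective dimension) for every $\epsilon,\tilde\epsilon>0$, $D_{\mathrm{eff}}>D^{\mathrm{mc}}e^{-\gamma_\epsilon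 N}/\tilde\epsilon$ for all sufficiently large $N$, with $\gamma_\epsilon$ as in (ii). Then for every $\epsilon>0$, $\mathcal{D}_{\mathrm{S}}(\omega,\rho^{\mathrm{mc}})<\epsilon$ for all sufficiently large $N$, where $\omega$ is the diagonal ensemble of $\rho(0)$.
   Context: The diagonal ensemble of $\rho(0)$ is $\omega:=\lim_{\tau\to\infty}\frac1\tau\int_0^\tau e^{-iHt}\rho(0)e^{iHt}\,dt=\sum_j|E_j\rangle\langle E_j|\rho(0)|E_j\rangle\langle E_j|$ (non-degenerate $H$). The effective dimension is $D_{\mathrm{eff}}:=1/\sum_j\langle E_j|\rho(0)|E_j\rangle^2$. For density operators $\rho,\tau$ on $\mathcal{H}_{\mathrm{S}}\otimes\mathcal{H}_{\mathrm{B}}$, the local trace distance is $\mathcal{D}_{\mathrm{S}}(\rho,\tau):=\frac12\mathrm{Tr}\bigl|\mathrm{Tr}_{\mathrm{B}}\rho-\mathrm{Tr}_{\mathrm{B}}\tau\bigr|$. *)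

From mathcomp Require Import all_boot all_order all_algebra.
From mathcomp Require Import all_classical all_reals all_analysis.
From mathcomp Require Import complex mxtens.
Set Implicit Arguments.
Unset Strict Implicit.
Unset Printing Implicit Defensive.
Import Order.TTheory GRing.Theory Num.Theory.
Local Open Scope ring_scope.
Local Open Scope complex_scope.

Definition q_adj (R : realType) m n (A : 'M[R[i]]_(m, n)) : 'M[R[i]]_(n, m) :=
  \matrix_(i, j) conjc (A j i).

Definition q_ketbra (R : realType) n (v w : 'cV[R[i]]_n) : 'M[R[i]]_n :=
  v *m q_adj w.

Definition q_braket (R : realType) n (v : 'cV[R[i]]_n) (A : 'M[R[i]]_n)
  (w : 'cV[R[i]]_n) : R[i] := (q_adj v *m A *m w) 0 0.

Definition q_hermitian (R : realType) n (A : 'M[R[i]]_n) : Prop := q_adj A = A.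

Definition q_unitary (R : realType) n (U : 'M[R[i]]_n) : Prop := q_adj U *m U = 1%:M.

(* positive semidefinite: <x|A|x> >= 0 (in the complex order, i.e. real and
   nonnegative) for all x *)
Definition q_psd (R : realType) n (A : 'M[R[i]]_n) : Prop :=
  forall x : 'cV[R[i]]_n, 0 <= q_braket x A x.

Definition q_density (R : realType) n (rho : 'M[R[i]]_n) : Prop :=
  q_psd rho /\ \tr rho = 1.

(* The family (v j)_j is an orthonormal basis: <v j|v k> = delta_jk
   (n orthonormal vectors in an n-dimensional space form a basis). *)
Definition q_orthonormal_basis (R : realType) n (v : 'I_n -> 'cV[R[i]]_n) : Prop :=
  forall j k, q_braket (v j) 1%:M (v k) = (j == k)%:R.

Definition q_singular_values (R : realType) n (A : 'M[R[i]]_n) (s : 'I_n -> R) : Prop :=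
  (forall i, 0 <= s i) /\
  exists U V : 'M[R[i]]_n, q_unitary U /\ q_unitary V /\
    A = U *m diag_mx (\row_i (s i)%:C) *m q_adj V.

(* trace norm Tr|A| = Tr sqrt(A^dagger A) = sum of the singular values of A
   (a singular value decomposition always exists in finite dimension; the
   sum does not depend on the chosen decomposition). *)
Definition q_trnorm (R : realType) n (A : 'M[R[i]]_n) : R :=
  match boolp.pselect (exists s, q_singular_values A s) with
  | left h => \sum_i (proj1_sig (boolp.cid h)) i
  | right _ => 0
  end.

(* partial trace over the bath, H_S (dim dS) (x) H_B (dim dB), with the
   index convention of mxtens (same as the Kronecker product A *t B). *)
Definition q_ptrB (R : realType) dS dB (A : 'M[R[i]]_(dS * dB)) : 'M[R[i]]_dS :=
  \matrix_(i, k) \sum_(b < dB) A (mxtens_index (i, b)) (mxtens_index (k, b)).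

Definition q_DS (R : realType) dS dB (rho tau : 'M[R[i]]_(dS * dB)) : R :=
  2^-1 * q_trnorm (q_ptrB rho - q_ptrB tau).

Definition q_diag_ens (R : realType) n (v : 'I_n -> 'cV[R[i]]_n) (rho : 'M[R[i]]_n)
  : 'M[R[i]]_n :=
  \sum_j q_braket (v j) rho (v j) *: q_ketbra (v j) (v j).

(* effective dimension D_eff = 1 / sum_j <E_j|rho|E_j>^2 (these overlaps are
   real, we take their real part) *)
Definition q_Deff (R : realType) n (v : 'I_n -> 'cV[R[i]]_n) (rho : 'M[R[i]]_n) : R :=
  (\sum_j (complex.Re (q_braket (v j) rho (v j))) ^+ 2)^-1.

Definition q_shell (R : realType) n (E : 'I_n -> R) (e Delta : R) : {set 'I_n} :=
  [set j | `|E j - e| <= Delta].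

Definition q_rho_mc (R : realType) n (v : 'I_n -> 'cV[R[i]]_n) (M : {set 'I_n})
  : 'M[R[i]]_n :=
  (#|M|%:R)^-1 *: \sum_(j in M) q_ketbra (v j) (v j).

Definition q_P_out (R : realType) n (v : 'I_n -> 'cV[R[i]]_n) (M : {set 'I_n})
  : 'M[R[i]]_n :=
  \sum_(j in ~: M) q_ketbra (v j) (v j).

(* For a unitary W, A |-> Re Tr (W Tr_B A) is a real-linear functional, at most 1 on
   pure states, and the trace norm of a Hermitian matrix is the supremum of
   Re Tr (W Y) over unitaries W.  Writing omega = sum_j r_j |E_j><E_j| with
   r_j = <E_j|rho(0)|E_j>, each such functional separates omega from rho^mc by at
   most 2 eps (eigenstates of the shell satisfying ETH) plus twice the weight r_j
   carried outside the shell (assumption (i)) and on the ETH-violating set B.  By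
   Cauchy-Schwarz, sum_(j in B) r_j <= sqrt (|B| sum_j r_j^2) = sqrt (|B| / D_eff),
   and (ii) together with (iii) make |B| / D_eff small. *)

From mathcomp Require Import all_boot all_order all_algebra.
From mathcomp Require Import all_classical all_reals all_analysis.
From mathcomp Require Import complex mxtens.
From mathcomp Require Import ring lra.
Set Implicit Arguments.
Unset Strict Implicit.
Unset Printing Implicit Defensive.
Import Order.TTheory GRing.Theory Num.Theory.
Local Open Scope ring_scope.
Local Open Scope complex_scope.

Lemma mxtrace_sum (R : pzRingType) n (I : finType) (P : pred I) (F : I -> 'M[R]_n) :
  \tr (\sum_(j | P j) F j) = \sum_(j | P j) \tr (F j).
Proof. by rewrite /mxtrace; under eq_bigr do rewrite summxE; rewrite exchange_big. Qed.

Lemma sum_tens (V : nmodType) m n (F : 'I_(m * n) -> V) :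
  \sum_k F k = \sum_(i < m) \sum_(j < n) F (mxtens_index (i, j)).
Proof.
rewrite pair_big /= (reindex (@mxtens_index m n)) /=; first by apply: eq_bigr => -[].
by exists (@mxtens_unindex m n) => k _; [apply: mxtens_indexK | apply: mxtens_unindexK].
Qed.

Section Adjoint.
Variable R : realType.

Lemma q_adjN m n (A : 'M[R[i]]_(m, n)) : q_adj (- A) = - q_adj A.
Proof. by apply/matrixP => i j; rewrite !mxE rmorphN. Qed.

Lemma q_adjD m n (A B : 'M[R[i]]_(m, n)) : q_adj (A + B) = q_adj A + q_adj B.
Proof. by apply/matrixP => i j; rewrite !mxE rmorphD. Qed.

Lemma q_adjB m n (A B : 'M[R[i]]_(m, n)) : q_adj (A - B) = q_adj A - q_adj B.
Proof. by apply/matrixP => i j; rewrite !mxE rmorphB. Qed.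

Lemma q_adj_sum m n (I : finType) (P : pred I) (F : I -> 'M[R[i]]_(m, n)) :
  q_adj (\sum_(k | P k) F k) = \sum_(k | P k) q_adj (F k).
Proof.
apply/matrixP => i j; rewrite !mxE !summxE rmorph_sum.
by apply: eq_bigr => k _; rewrite mxE.
Qed.

Lemma q_adjZ m n c (A : 'M[R[i]]_(m, n)) : q_adj (c *: A) = c^* *: q_adj A.
Proof. by apply/matrixP => i j; rewrite !mxE rmorphM. Qed.

Lemma q_adjK m n (A : 'M[R[i]]_(m, n)) : q_adj (q_adj A) = A.
Proof. by apply/matrixP => i j; rewrite !mxE conjcK. Qed.

Lemma q_adj_mul m n p (A : 'M[R[i]]_(m, n)) (B : 'M[R[i]]_(n, p)) :
  q_adj (A *m B) = q_adj B *m q_adj A.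
Proof.
apply/matrixP => i j; rewrite !mxE rmorph_sum; apply: eq_bigr => k _.
by rewrite !mxE rmorphM mulrC.
Qed.

Lemma q_adj_delta n (k : 'I_n) : q_adj (delta_mx k 0 : 'cV[R[i]]_n) = delta_mx 0 k.
Proof. by apply/matrixP => a b; rewrite !mxE conjc_nat andbC. Qed.

Lemma q_adj_diag n (d : 'rV[R[i]]_n) : q_adj (diag_mx d) = diag_mx (\row_k (d 0 k)^*%R).
Proof. by apply/matrixP => a b; rewrite !mxE eq_sym rmorphMn; case: eqP => [->|]. Qed.

Lemma q_adj_tens m n p q (A : 'M[R[i]]_(m, n)) (B : 'M[R[i]]_(p, q)) :
  q_adj (A *t B) = q_adj A *t q_adj B.
Proof. by apply/matrixP => a b; rewrite !mxE rmorphM. Qed.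

Lemma q_adj_tC m n (A : 'M[R[i]]_(m, n)) : q_adj A = (A ^t* )%sesqui.
Proof. by apply/matrixP => i j; rewrite !mxE. Qed.

End Adjoint.

Section Operators.
Variable R : realType.

Lemma Re_ge0 (z : R[i]) : 0 <= z -> 0 <= complex.Re z.
Proof. by rewrite lecE => /andP[]. Qed.

Lemma geC0_RRe (z : R[i]) : 0 <= z -> z = (complex.Re z)%:C.
Proof. by case: z => a b; rewrite lecE /= => /andP[/eqP ->]. Qed.

Lemma q_unitaryC n (U : 'M[R[i]]_n) : q_unitary U -> U *m q_adj U = 1%:M.
Proof. by move=> hU; apply: mulmx1C. Qed.

Lemma q_unitaryM n (U V : 'M[R[i]]_n) :
  q_unitary U -> q_unitary V -> q_unitary (U *m V).
Proof.
rewrite /q_unitary q_adj_mul => hU hV.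
by rewrite mulmxA -(mulmxA _ _ U) hU mulmx1 hV.
Qed.

Lemma q_unitary_adj n (U : 'M[R[i]]_n) : q_unitary U -> q_unitary (q_adj U).
Proof. by move=> hU; rewrite /q_unitary q_adjK q_unitaryC. Qed.

Lemma q_unitaryN n (U : 'M[R[i]]_n) : q_unitary U -> q_unitary (- U).
Proof. by move=> hU; rewrite /q_unitary q_adjN mulNmx mulmxN opprK. Qed.

Lemma q_braket_delta n (A : 'M[R[i]]_n) j k :
  q_braket (delta_mx j 0) A (delta_mx k 0) = A j k.
Proof. by rewrite /q_braket q_adj_delta -rowE -colE !mxE. Qed.

Lemma q_braketDl n (x y z : 'cV[R[i]]_n) A :
  q_braket (x + y) A z = q_braket x A z + q_braket y A z.
Proof. by rewrite /q_braket q_adjD !mulmxDl mxE. Qed.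

Lemma q_braketDr n (x y z : 'cV[R[i]]_n) A :
  q_braket z A (x + y) = q_braket z A x + q_braket z A y.
Proof. by rewrite /q_braket mulmxDr mxE. Qed.

Lemma q_braketZl n c (x z : 'cV[R[i]]_n) A :
  q_braket (c *: x) A z = c^* * q_braket x A z.
Proof. by rewrite /q_braket q_adjZ -!scalemxAl mxE. Qed.

Lemma q_braketZr n c (x z : 'cV[R[i]]_n) A :
  q_braket z A (c *: x) = c * q_braket z A x.
Proof. by rewrite /q_braket -!scalemxAr mxE. Qed.

Lemma q_ketbraE n (x y : 'cV[R[i]]_n) j k : q_ketbra x y j k = x j 0 * (y k 0)^*.
Proof. by rewrite /q_ketbra mxE big_ord1 mxE. Qed.

Lemma mxtrace_ketbra_mul n (x : 'cV[R[i]]_n) (A : 'M[R[i]]_n) :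
  \tr (q_ketbra x x *m A) = q_braket x A x.
Proof. by rewrite /q_ketbra /q_braket -mulmxA mxtrace_mulC /mxtrace big_ord1. Qed.

Lemma q_hermitian_ketbra n (x : 'cV[R[i]]_n) : q_hermitian (q_ketbra x x).
Proof. by rewrite /q_hermitian /q_ketbra q_adj_mul q_adjK. Qed.

Lemma q_braket_norm_ge0 n (x : 'cV[R[i]]_n) : 0 <= q_braket x 1%:M x.
Proof.
rewrite /q_braket mulmx1 mxE; apply: sumr_ge0 => k _.
by rewrite mxE mulrC; apply: mul_conjC_ge0.
Qed.

(* expand the norm of [x - Q x], using [Q^+ Q = 1] *)
Lemma Re_braket_unitary_le n (Q : 'M[R[i]]_n) (x : 'cV[R[i]]_n) :
  q_unitary Q -> complex.Re (q_braket x Q x) <= complex.Re (q_braket x 1%:M x).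
Proof.
move=> hQ; have := Re_ge0 (q_braket_norm_ge0 (x - Q *m x)).
rewrite /q_braket !mulmx1 q_adjB q_adj_mul mulmxBl !mulmxBr -!mulmxA.
rewrite (mulmxA (q_adj Q)) hQ mul1mx.
have -> : q_adj x *m (q_adj Q *m x) = q_adj (q_adj x *m (Q *m x)).
  by rewrite !q_adj_mul q_adjK mulmxA.
rewrite !mxE !raddfB /=.
by case: (\sum_(j < n) q_adj x 0 j * (Q *m x) j 0) => a b /=; lra.
Qed.

Lemma Re_unitary_diag_le1 n (Q : 'M[R[i]]_n) k : q_unitary Q -> complex.Re (Q k k) <= 1.
Proof.
move=> /(Re_braket_unitary_le (delta_mx k 0)).
by rewrite !q_braket_delta mxE eqxx.
Qed.

End Operators.

Section TraceNorm.
Variable R : realType.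

Lemma mxtrace_svd n (W U V : 'M[R[i]]_n) (s : 'I_n -> R) :
  \tr (W *m (U *m diag_mx (\row_k (s k)%:C) *m q_adj V)) =
  \sum_k (q_adj V *m W *m U) k k * (s k)%:C.
Proof.
rewrite !mulmxA mxtrace_mulC !mulmxA mul_mx_diag /mxtrace.
by apply: eq_bigr => k _; rewrite !mxE.
Qed.

Lemma Re_tr_le_trnorm n (A W : 'M[R[i]]_n) :
  (exists s, q_singular_values A s) -> q_unitary W ->
  complex.Re (\tr (W *m A)) <= q_trnorm A.
Proof.
move=> hsvd hW; rewrite /q_trnorm; case: boolp.pselect => // h.
case: (boolp.cid h) => s [hs [U [V [hU [hV hA]]]]] /=.
rewrite [in \tr _]hA mxtrace_svd raddf_sum /=; apply: ler_sum => k _.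
have hQ : q_unitary (q_adj V *m W *m U).
  by do 2?apply: q_unitaryM => //; apply: q_unitary_adj.
have := Re_unitary_diag_le1 k hQ.
case: (_ k k) => a b /= ha; rewrite mulr0 subr0 -[leRHS]mul1r.
exact: ler_wpM2r.
Qed.

(* [0 <= c] covers the junk value [q_trnorm A = 0] taken when no singular value
   decomposition is found *)
Lemma trnorm_le n (A : 'M[R[i]]_n) c : 0 <= c ->
  (forall W, q_unitary W -> complex.Re (\tr (W *m A)) <= c) -> q_trnorm A <= c.
Proof.
move=> hc hW; rewrite /q_trnorm; case: boolp.pselect => // h.
case: (boolp.cid h) => s [hs [U [V [hU [hV hA]]]]] /=.
have hVU : q_unitary (V *m q_adj U) by apply: q_unitaryM => //; apply: q_unitary_adj.
have := hW _ hVU; rewrite [in \tr _]hA mxtrace_svd mulmxA hV mul1mx hU raddf_sum /=.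
by under eq_bigr do rewrite !mxE eqxx /= mul1r mul0r subr0.
Qed.

Lemma q_hermitian_spectral n (Y : 'M[R[i]]_n) : q_hermitian Y ->
  exists (P : 'M[R[i]]_n) (d : 'I_n -> R),
    q_unitary P /\ Y = q_adj P *m diag_mx (\row_k (d k)%:C) *m P.
Proof.
move=> hY.
have /orthomx_spectralP : Y \is normalmx by apply/normalmxP; rewrite -q_adj_tC hY.
set P := spectralmx Y; set sp := spectral_diag Y => hYe.
have hPu : P \is unitarymx := spectral_unitarymx Y.
have hPP : P *m q_adj P = 1%:M by rewrite q_adj_tC; apply/unitarymxP.
rewrite invmx_unitary // -q_adj_tC in hYe.
have hD : diag_mx sp = P *m Y *m q_adj P.
  by rewrite hYe !mulmxA hPP mul1mx -mulmxA hPP mulmx1.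
have /matrixP hsp : q_adj (diag_mx sp) = diag_mx sp.
  by rewrite hD !q_adj_mul q_adjK hY mulmxA.
exists P, (fun k => complex.Re (sp 0 k)); split; first exact: mulmx1C.
rewrite [LHS]hYe; congr (_ *m diag_mx _ *m _); apply/rowP => k.
have := hsp k k; rewrite q_adj_diag !mxE eqxx !mulr1n.
by case: (sp 0 k) => a b [] /= hb; congr (_ +i* _); lra.
Qed.

Lemma q_hermitian_singular_values n (Y : 'M[R[i]]_n) : q_hermitian Y ->
  exists s, q_singular_values Y s.
Proof.
move=> /q_hermitian_spectral [P [d [hP ->]]].
pose sg k : R := if 0 <= d k then 1 else -1.
exists (fun k => `|d k|); split=> [k|]; first exact: normr_ge0.
exists (q_adj P), (q_adj P *m diag_mx (\row_k (sg k)%:C)).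
split; first exact: q_unitary_adj.
split.
  rewrite /q_unitary q_adj_mul q_adjK q_adj_diag mulmxA -(mulmxA _ P).
  rewrite q_unitaryC // mulmx1 mulmx_diag; apply/matrixP => j k; rewrite !mxE.
  by case: eqP => [->|] //=; rewrite /sg; case: ifP => _ /=; simpc.
rewrite q_adj_mul q_adjK q_adj_diag !mulmxA.
rewrite -[in RHS](mulmxA (q_adj P) (diag_mx _) (diag_mx _)) mulmx_diag.
congr (_ *m diag_mx _ *m _); apply/rowP => k; rewrite !mxE /sg.
case: ifP => h /=; first by rewrite ger0_norm //; simpc.
by rewrite ltr0_norm ?ltNge ?h //; simpc.
Qed.

End TraceNorm.

Section PositiveOperators.
Variable R : realType.

(* polarization with [e_j + e_k] and [e_j + i e_k] *)
Lemma q_psd_hermitian n (A : 'M[R[i]]_n) : q_psd A -> q_hermitian A.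
Proof.
move=> hA; apply/matrixP => j k; rewrite mxE.
have hIm x : complex.Im (q_braket x A x) = 0 := ger0_Im (hA x).
have := hIm (delta_mx j 0 + delta_mx k 0).
have := hIm (delta_mx j 0 + 'i *: delta_mx k 0).
have := hIm (delta_mx j 0); have := hIm (delta_mx k 0).
rewrite !(q_braketDl, q_braketDr, q_braketZl, q_braketZr, q_braket_delta).
case: (A j j) => a1 a2; case: (A j k) => b1 b2; case: (A k j) => c1 c2.
case: (A k k) => d1 d2 /= hkk hjj h2 h1.
by apply/eqP; rewrite eq_complex /=; apply/andP; split; apply/eqP; lra.
Qed.

Lemma q_gram_psd m n (C : 'M[R[i]]_(m, n)) : q_psd (q_adj C *m C).
Proof.
move=> x; have := q_braket_norm_ge0 (C *m x).
by rewrite /q_braket mulmx1 q_adj_mul !mulmxA.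
Qed.

Lemma q_psd_gram n (A : 'M[R[i]]_n) :
  q_psd A -> exists C : 'M[R[i]]_n, A = q_adj C *m C.
Proof.
move=> hA; have [P [d [hP hAe]]] := q_hermitian_spectral (q_psd_hermitian hA).
have hd k : 0 <= (d k)%:C.
  have := hA (q_adj P *m delta_mx k 0).
  rewrite /q_braket q_adj_mul q_adjK q_adj_delta hAe !mulmxA.
  rewrite -!(mulmxA _ P (q_adj P)) q_unitaryC // !mulmx1.
  by rewrite -rowE -colE !mxE eqxx mulr1n.
exists (diag_mx (\row_k sqrtC (d k)%:C) *m P); rewrite q_adj_mul q_adj_diag mulmxA.
rewrite -(mulmxA (q_adj P)) mulmx_diag [LHS]hAe.
congr (_ *m diag_mx _ *m _); apply/rowP => k.
by rewrite !mxE geC0_conj ?sqrtC_ge0 // -expr2 sqrtCK.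
Qed.

Lemma q_psd_tens m n (A : 'M[R[i]]_m) (B : 'M[R[i]]_n) :
  q_psd A -> q_psd B -> q_psd (A *t B).
Proof.
move=> /q_psd_gram [C ->] /q_psd_gram [D ->].
rewrite -tensmx_mul -q_adj_tens; exact: q_gram_psd.
Qed.

Lemma mxtrace_tens m n (A : 'M[R[i]]_m) (B : 'M[R[i]]_n) : \tr (A *t B) = \tr A * \tr B.
Proof.
rewrite /mxtrace sum_tens big_distrl; apply: eq_bigr => i _ /=.
by rewrite big_distrr; apply: eq_bigr => b _; rewrite tensmxE.
Qed.

Lemma q_density_tens m n (A : 'M[R[i]]_m) (B : 'M[R[i]]_n) :
  q_density A -> q_density B -> q_density (A *t B).
Proof.
move=> [hA trA] [hB trB]; split; first exact: q_psd_tens.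
by rewrite mxtrace_tens trA trB mulr1.
Qed.

End PositiveOperators.

Section PartialTrace.
Variables (R : realType) (dS dB : nat).
Implicit Types (A B : 'M[R[i]]_(dS * dB)) (W : 'M[R[i]]_dS).

Lemma q_ptrB_sum (I : finType) (P : pred I) (F : I -> 'M[R[i]]_(dS * dB)) :
  q_ptrB (\sum_(j | P j) F j) = \sum_(j | P j) q_ptrB (F j).
Proof.
apply/matrixP => a c; rewrite !mxE summxE.
under eq_bigr do rewrite summxE.
by rewrite exchange_big; apply: eq_bigr => j _; rewrite mxE.
Qed.

Lemma q_ptrBZ z A : q_ptrB (z *: A) = z *: q_ptrB A.
Proof.
by apply/matrixP => a c; rewrite !mxE mulr_sumr; apply: eq_bigr => b _; rewrite mxE.
Qed.

Lemma q_ptrBB A B : q_ptrB (A - B) = q_ptrB A - q_ptrB B.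
Proof.
by apply/matrixP => a c; rewrite !mxE -sumrB; apply: eq_bigr => b _; rewrite !mxE.
Qed.

Lemma q_adj_ptrB A : q_adj (q_ptrB A) = q_ptrB (q_adj A).
Proof.
apply/matrixP => a c; rewrite !mxE rmorph_sum.
by apply: eq_bigr => b _; rewrite mxE.
Qed.

Lemma mxtrace_ptrB A : \tr (q_ptrB A) = \tr A.
Proof.
rewrite [RHS]/mxtrace sum_tens; apply: eq_bigr => a _.
by rewrite mxE.
Qed.

Definition bath_slice (x : 'cV[R[i]]_(dS * dB)) (b : 'I_dB) : 'cV[R[i]]_dS :=
  \col_k x (mxtens_index (k, b)) 0.

Lemma q_ptrB_ketbra x :
  q_ptrB (q_ketbra x x) = \sum_b q_ketbra (bath_slice x b) (bath_slice x b).
Proof.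
apply/matrixP => a c; rewrite mxE summxE; apply: eq_bigr => b _.
by rewrite !q_ketbraE !mxE.
Qed.

Lemma mxtrace_mul_ptrB_ketbra W x :
  \tr (W *m q_ptrB (q_ketbra x x)) =
  \sum_b q_braket (bath_slice x b) W (bath_slice x b).
Proof.
rewrite q_ptrB_ketbra mulmx_sumr mxtrace_sum; apply: eq_bigr => b _.
by rewrite mxtrace_mulC mxtrace_ketbra_mul.
Qed.

Definition red_expect W A : R := complex.Re (\tr (W *m q_ptrB A)).

Lemma red_expect_sum W (I : finType) (P : pred I) (r : I -> R)
    (F : I -> 'M[R[i]]_(dS * dB)) :
  red_expect W (\sum_(j | P j) (r j)%:C *: F j) =
  \sum_(j | P j) r j * red_expect W (F j).
Proof.
rewrite /red_expect q_ptrB_sum mulmx_sumr mxtrace_sum raddf_sum /=.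
apply: eq_bigr => j _.
rewrite q_ptrBZ -scalemxAr mxtraceZ.
by case: (\tr _) => a b /=; rewrite mul0r subr0.
Qed.

Lemma red_expectB W A B : red_expect W (A - B) = red_expect W A - red_expect W B.
Proof. by rewrite /red_expect q_ptrBB mulmxBr !raddfB. Qed.

Lemma red_expectN W A : red_expect (- W) A = - red_expect W A.
Proof. by rewrite /red_expect mulNmx !raddfN. Qed.

Lemma red_expect_ketbra_le1 W x : q_unitary W -> q_braket x 1%:M x = 1 ->
  red_expect W (q_ketbra x x) <= 1.
Proof.
move=> hW hx; rewrite /red_expect mxtrace_mul_ptrB_ketbra raddf_sum /=.
have <- : complex.Re (\sum_b q_braket (bath_slice x b) 1%:M (bath_slice x b)) = 1.
  by rewrite -mxtrace_mul_ptrB_ketbra mul1mx mxtrace_ptrB -[q_ketbra x x]mulmx1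
    mxtrace_ketbra_mul hx.
by rewrite raddf_sum; apply: ler_sum => b _; apply: Re_braket_unitary_le.
Qed.

Lemma red_expect_sub_le_DS W A B : q_hermitian A -> q_hermitian B -> q_unitary W ->
  red_expect W A - red_expect W B <= 2 * q_DS A B.
Proof.
move=> hA hB hW; rewrite /q_DS mulrA mulfV ?pnatr_eq0 // mul1r -red_expectB.
rewrite /red_expect q_ptrBB; apply: Re_tr_le_trnorm => //.
by apply: q_hermitian_singular_values; rewrite /q_hermitian q_adjB !q_adj_ptrB hA hB.
Qed.

End PartialTrace.

Section WeightEstimates.
Variable R : realType.

Lemma weighted_gap_le (I : finType) (M B : {set I}) (r g : I -> R) (c d : R) :
  (forall j, 0 <= r j) -> \sum_j r j = 1 -> (forall j, g j <= 1) -> -1 <= c ->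
  (forall j, j \in M -> j \notin B -> g j - c <= 2 * d) -> 0 <= d ->
  \sum_j r j * g j - c <= 2 * d + 2 * \sum_(j in ~: M) r j + 2 * \sum_(j in B) r j.
Proof.
move=> r_ge0 r_sum g_le1 c_ge hgap d_ge0.
have term_le j : r j * g j - r j * c <=
    2 * d * r j + (if j \in ~: M then 2 * r j else 0)
    + (if j \in B then 2 * r j else 0).
  have := r_ge0 j; have := g_le1 j; rewrite inE.
  case: ifP => jM; case: ifP => jB /=; try nra.
  by have := hgap j (negbFE jM) (negbT jB); nra.
rewrite -[c]mul1r -r_sum mulr_suml -sumrB.
apply: le_trans (ler_sum _ (fun j _ => term_le j)) _.
by rewrite !big_split /= -!big_mkcond -!mulr_sumr r_sum mulr1.
Qed.

(* AM-GM: [r <= a/2 r^2 + 1/(2a)], with [a = d / S] *)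
Lemma sum_lt_of_sum_sqr (I : finType) (B : {set I}) (r : I -> R) (S d : R) :
  0 < S -> 0 < d -> \sum_(j in B) r j ^+ 2 <= S -> #|B|%:R * S < d ^+ 2 ->
  \sum_(j in B) r j < d.
Proof.
move=> S_gt0 d_gt0 hsq hcard; pose a := d / S.
have a_gt0 : 0 < a by rewrite divr_gt0.
have amgm x : x <= a / 2 * x ^+ 2 + (2 * a)^-1.
  have -> : a / 2 * x ^+ 2 + (2 * a)^-1 = x + (2 * a)^-1 * (a * x - 1) ^+ 2.
    by field; rewrite gt_eqF.
  by rewrite lerDl mulr_ge0 ?sqr_ge0 // invr_ge0 mulr_ge0 // ltW.
apply: le_lt_trans (ler_sum _ (fun j _ => amgm (r j))) _.
rewrite big_split /= -mulr_sumr sumr_const -[_ *+ #|B|]mulr_natr.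
have h1 : a / 2 * \sum_(j in B) r j ^+ 2 <= d / 2.
  have -> : d / 2 = a / 2 * S by rewrite /a; field; rewrite gt_eqF.
  by rewrite ler_wpM2l // divr_ge0 // ltW.
have h2 : (2 * a)^-1 * #|B|%:R < d / 2.
  have -> : (2 * a)^-1 * #|B|%:R = #|B|%:R * S / (2 * d).
    by rewrite /a; field; rewrite !gt_eqF.
  have -> : d / 2 = d ^+ 2 / (2 * d) by field; rewrite gt_eqF.
  by rewrite ltr_pM2r // invr_gt0 mulr_gt0.
by rewrite [ltRHS]splitr; apply: ler_ltD.
Qed.

End WeightEstimates.

Section Eigenbasis.
Variables (R : realType) (n : nat) (v : 'I_n -> 'cV[R[i]]_n).
Hypothesis hv : q_orthonormal_basis v.

Lemma q_orthonormal_basis_complete : \sum_j q_ketbra (v j) (v j) = 1%:M.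
Proof.
pose V : 'M[R[i]]_n := \matrix_(k, j) v j k 0.
have hV : q_adj V *m V = 1%:M.
  apply/matrixP => a b; rewrite [RHS]mxE -hv /q_braket mulmx1 !mxE.
  by apply: eq_bigr => k _; rewrite !mxE.
apply/matrixP => a b; rewrite -(mulmx1C hV) summxE mxE; apply: eq_bigr => j _.
by rewrite q_ketbraE !mxE.
Qed.

Lemma mxtrace_eigenbasis (A : 'M[R[i]]_n) : \tr A = \sum_j q_braket (v j) A (v j).
Proof.
rewrite -{1}[A]mul1mx -q_orthonormal_basis_complete mulmx_suml mxtrace_sum.
by apply: eq_bigr => j _; rewrite mxtrace_ketbra_mul.
Qed.

Lemma q_braket_eigenvector_norm j : q_braket (v j) 1%:M (v j) = 1.
Proof. by rewrite hv eqxx. Qed.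

End Eigenbasis.

Section MicrocanonicalDistance.
Variables (R : realType) (dS dB : nat).
Variables (v : 'I_(dS * dB) -> 'cV[R[i]]_(dS * dB)) (rho : 'M[R[i]]_(dS * dB)).
Variables (M : {set 'I_(dS * dB)}) (delta : R).
Hypotheses (hv : q_orthonormal_basis v) (hrho : q_density rho).
Hypotheses (hM : M != finset.set0) (delta_gt0 : 0 < delta).

Let r j := complex.Re (q_braket (v j) rho (v j)).
Let B := [set j in M | q_DS (q_ketbra (v j) (v j)) (q_rho_mc v M) > delta].

Lemma q_rho_mc_sum : q_rho_mc v M =
  \sum_(k in M) ((#|M|%:R)^-1)%:C *: q_ketbra (v k) (v k).
Proof. by rewrite /q_rho_mc scaler_sumr fmorphV rmorph_nat. Qed.

Lemma q_hermitian_rho_mc : q_hermitian (q_rho_mc v M).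
Proof.
rewrite /q_hermitian q_rho_mc_sum q_adj_sum; apply: eq_bigr => k _.
by rewrite q_adjZ q_hermitian_ketbra; congr (_ *: _); apply: conjc_real.
Qed.

Lemma diag_weight_ge0 j : 0 <= r j.
Proof. exact/Re_ge0/hrho.1. Qed.

Lemma diag_weight_sum : \sum_j r j = 1.
Proof. by rewrite -raddf_sum -mxtrace_eigenbasis // hrho.2. Qed.

Lemma q_diag_ens_weights : q_diag_ens v rho = \sum_j (r j)%:C *: q_ketbra (v j) (v j).
Proof. by apply: eq_bigr => j _; rewrite -geC0_RRe //; apply: hrho.1. Qed.

Lemma Re_tr_P_out : complex.Re (\tr (q_P_out v M *m rho)) = \sum_(j in ~: M) r j.
Proof.
rewrite /q_P_out mulmx_suml mxtrace_sum raddf_sum.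
by apply: eq_bigr => j _; rewrite mxtrace_ketbra_mul.
Qed.

Lemma red_expect_ketbra_ge W j :
  q_unitary W -> -1 <= red_expect W (q_ketbra (v j) (v j)).
Proof.
move=> /q_unitaryN /red_expect_ketbra_le1 /(_ (q_braket_eigenvector_norm hv j)).
by rewrite red_expectN lerNl.
Qed.

Lemma red_expect_rho_mc_ge W : q_unitary W -> -1 <= red_expect W (q_rho_mc v M).
Proof.
move=> hW; rewrite q_rho_mc_sum red_expect_sum -mulr_sumr.
have hcard : 0 < #|M|%:R :> R by rewrite ltr0n card_gt0.
rewrite -ler_pdivrMl ?invr_gt0 // invrK -sumr_const mulrN1 -sumrN.
by apply: ler_sum => k _; apply: red_expect_ketbra_ge.
Qed.

Lemma red_expect_gap_le W : q_unitary W ->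
  red_expect W (q_diag_ens v rho) - red_expect W (q_rho_mc v M) <=
  2 * delta + 2 * \sum_(j in ~: M) r j + 2 * \sum_(j in B) r j.
Proof.
move=> hW; rewrite q_diag_ens_weights red_expect_sum.
apply: weighted_gap_le (ltW delta_gt0) => //.
- exact: diag_weight_ge0.
- exact: diag_weight_sum.
- by move=> j; apply: red_expect_ketbra_le1 => //; apply: q_braket_eigenvector_norm.
- exact: red_expect_rho_mc_ge.
move=> j jM jB; apply: le_trans (red_expect_sub_le_DS _ _ hW) _.
- exact: q_hermitian_ketbra.
- exact: q_hermitian_rho_mc.
by rewrite ler_pM2l // leNgt; move: jB; rewrite inE jM.
Qed.

Lemma weight_ETH_violating_lt : #|B|%:R < delta ^+ 2 * q_Deff v rho ->
  \sum_(j in B) r j < delta.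
Proof.
rewrite /q_Deff -/r; set S := \sum_j r j ^+ 2 => hB.
have S_gt0 : 0 < S.
  rewrite lt0r sumr_ge0 ?andbT => [|j _]; last exact: sqr_ge0.
  by apply: contraTneq hB => ->; rewrite invr0 mulr0 -leNgt.
apply: (sum_lt_of_sum_sqr S_gt0 delta_gt0).
  by rewrite [S](bigID (mem B)) /= lerDl sumr_ge0 // => j _; apply: sqr_ge0.
by rewrite -ltr_pdivlMr.
Qed.

Lemma DS_diag_ens_rho_mc_le :
  complex.Re (\tr (q_P_out v M *m rho)) < delta ->
  #|B|%:R < delta ^+ 2 * q_Deff v rho ->
  q_DS (q_diag_ens v rho) (q_rho_mc v M) <= 3 * delta.
Proof.
rewrite Re_tr_P_out => hout /weight_ETH_violating_lt hB.
suff : q_trnorm (q_ptrB (q_diag_ens v rho) - q_ptrB (q_rho_mc v M)) <= 6 * delta.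
  by rewrite /q_DS; lra.
apply: trnorm_le => [|W hW]; first by rewrite mulr_ge0 // ltW.
rewrite -q_ptrBB -[complex.Re _]/(red_expect W _) red_expectB.
by apply: le_trans (red_expect_gap_le hW) _; lra.
Qed.

End MicrocanonicalDistance.

Theorem lemma2 (R : realType) (dS : nat) (dB : nat -> nat)
  (H : forall N, 'M[R[i]]_(dS * dB N))
  (E : forall N, 'I_(dS * dB N) -> R)
  (v : forall N, 'I_(dS * dB N) -> 'cV[R[i]]_(dS * dB N))
  (rhoS : forall N : nat, 'M[R[i]]_dS) (rhoB : forall N, 'M[R[i]]_(dB N))
  (u : R) (Delta : nat -> R) (alpha : R) (gamma : R -> R) :
  (* Hamiltonian: Hermitian, orthonormal eigenbasis, non-degenerate spectrum *)
  (forall N, q_hermitian (H N)) ->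
  (forall N, q_orthonormal_basis (v N)) ->
  (forall N j, H N *m v N j = (E N j)%:C *: v N j) ->
  (forall N, injective (E N)) ->
  (* product initial state of q_density operators *)
  (forall N, q_density (rhoS N)) ->
  (forall N, q_density (rhoB N)) ->
  (* widths Delta_N > 0 with Delta_N = O(N^alpha), 0 <= alpha < 1 *)
  (forall N, 0 < Delta N) ->
  0 <= alpha < 1 ->
  (exists c : R, exists N0 : nat, forall N, (N0 <= N)%N ->
      Delta N <= c * (N%:R `^ alpha)) ->
  (* nonempty energy shells *)
  (forall N, q_shell (E N) (u * N%:R) (Delta N) != finset.set0) ->
  (* (i) *)
  (forall eps : R, 0 < eps -> exists N0 : nat, forall N, (N0 <= N)%N ->
      complex.Re (\tr (q_P_out (v N) (q_shell (E N) (u * N%:R) (Delta N))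
                        *m (tensmx (rhoS N) (rhoB N)))) < eps) ->
  (* (ii) weak ETH, with rate gamma eps *)
  (forall eps : R, 0 < eps -> 0 < gamma eps /\
    forall N,
      let M := q_shell (E N) (u * N%:R) (Delta N) in
      (#|M|%:R)^-1 *
        #|[set j in M | q_DS (q_ketbra (v N j) (v N j)) (q_rho_mc (v N) M) > eps]|%:R
      < expR (- (gamma eps * N%:R))) ->
  (* (iii) large effective dimension *)
  (forall eps epst : R, 0 < eps -> 0 < epst -> exists N0 : nat,
    forall N, (N0 <= N)%N ->
      let M := q_shell (E N) (u * N%:R) (Delta N) in
      q_Deff (v N) (tensmx (rhoS N) (rhoB N)) > #|M|%:R * expR (- (gamma eps * N%:R)) / epst) ->
  (* conclusion *)
  forall eps : R, 0 < eps -> exists N0 : nat, forall N, (N0 <= N)%N ->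
    q_DS (q_diag_ens (v N) (tensmx (rhoS N) (rhoB N)))
       (q_rho_mc (v N) (q_shell (E N) (u * N%:R) (Delta N))) < eps.
Proof.
move=> _ hv _ _ hS hB _ _ _ hne hout hETH hDeff eps eps_gt0.
pose delta := eps / 4.
have delta_gt0 : 0 < delta by rewrite divr_gt0.
have [_ hETHd] := hETH delta delta_gt0.
have [N1 hN1] := hout delta delta_gt0.
have [N2 hN2] := hDeff delta (delta ^+ 2) delta_gt0 (exprn_gt0 2 delta_gt0).
exists (maxn N1 N2) => N; rewrite geq_max => /andP[/hN1 hPout /hN2 hD].
move: (hETHd N) hD => /= hcardB hD.
set M := q_shell _ _ _ in hPout hcardB hD *.
have M_gt0 : 0 < #|M|%:R :> R by rewrite ltr0n card_gt0 hne.
have hsmall :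
    #|[set j in M | q_DS (q_ketbra (v N j) (v N j)) (q_rho_mc (v N) M) > delta]|%:R
    < delta ^+ 2 * q_Deff (v N) (rhoS N *t rhoB N).
  rewrite ltr_pdivrMl // in hcardB; apply: (lt_trans hcardB).
  by rewrite [ltRHS]mulrC -ltr_pdivrMr ?exprn_gt0.
apply: le_lt_trans (DS_diag_ens_rho_mc_le (hv N) (q_density_tens (hS N) (hB N))
  (hne N) delta_gt0 hPout hsmall) _.
by rewrite /delta; lra.
Qed.
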